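(* Let $\mathfrak g$ be a $3$-Lie algebra over a field $\mathbb k$ and $(X,\Delta,T)$ its associated TSD object. Define $\Lambda^2(\phi)((a,x)\otimes(b,y)\otimes(c,z))=(0,\phi(x,y,z))$ for $3$-Lie $2$-cochains $\phi$. Then $\Lambda^2$ maps $3$-Lie $2$-cocycles to TSD $2$-cocycles and $3$-Lie $2$-coboundaries to TSD $2$-coboundaries, hence induces a homomorphism $H^2_{3\rm Lie}(\mathfrak g;\mathfrak g)\to H^2_{\rm TSD}(X;X)$.
   Context: A $3$-Lie algebra (Filippov) is a vector space $\mathfrak g$ with an alternating trilinear bracket $[\cdot,\cdot,\cdot]$ satisfying $[[x,y,z],w,u]=[[x,w,u],y,z]+[x,[y,w,u],z]+[x,y,[z,w,u]]$. Associated TSD object: $X=\mathbb k\oplus\mathfrak g$, $\Delta(a,x)=(a,x)\otimes(1,0)+(1,0)\otimes(0,x)$, $\Delta_3=(\Delta\otimes\mathbb 1)\Delta$ (Sweedler $w^{(1)}\otimes w^{(2)}\otimes w^{(3)}$), $T((a,x)\otimes(b,y)\otimes(c,z))=(abc,\ bcx+[x,y,z])$. $3$-Lie cohomology: $2$-cochains are alternating trilinear $\phi\colon\mathfrak g^3\to\mathfrak g$; $\delta^2\phi(x,y,z,w,u)=[\phi(x,y,z),w,u]+\phi([x,y,z],w,u)-[\phi(x,w,u),y,z]-[x,\phi(y,w,u),z]-[x,y,\phi(z,w,u)]-\phi([x,w,u],y,z)-\phi(x,[y,w,u],z)-\phi(x,y,[z,w,u])$; for linear $f\colon\mathfrak g\to\mathfrak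 g$, $\delta^1f(x,y,z)=f([x,y,z])-[f(x),y,z]-[x,f(y),z]-[x,y,f(z)]$; $H^2_{3\rm Lie}=\ker\delta^2/\operatorname{im}\delta^1$. TSD cohomology: with $\sigma$ sending $u_1\otimes\cdots\otimes u_9$ to $u_1\otimes u_4\otimes u_7\otimes u_2\otimes u_5\otimes u_8\otimes u_3\otimes u_6\otimes u_9$: $C^1_{\rm TSD}$ = linear $f$ with $\Delta_3 f=(f\otimes\mathbb 1\otimes\mathbb 1+\mathbb 1\otimes f\otimes\mathbb 1+\mathbb 1\otimes\mathbb 1\otimes f)\Delta_3$; $C^2_{\rm TSD}$ = linear $\psi$ with $\Delta_3\psi=(\psi\otimes T\otimes T+T\otimes\psi\otimes T+T\otimes T\otimes\psi)\sigma\Delta_3^{\otimes3}$; $\delta^1 f(x\otimes y\otimes z)=f(T(x\otimes y\otimes z))-T(f(x)\otimes y\otimes z)-T(x\otimes f(y)\otimes z)-T(x\otimes y\otimes f(z))$; $\delta^2\psi(x\otimes y\otimes z\otimes w\otimes u)=T(\psi(x\otimes y\otimes z)\otimes w\otimes u)+\psi(T(x\otimes y\otimes z)\otimes w\otimes u)-\psi(A_1\otimes A_2\otimes A_3)-T(\Psi_1\otimes A_2\otimes A_3)-T(A_1\otimes\Psi_2\otimes A_3)-T(A_1\otimes A_2\otimes\Psi_3)$, $A_i=T(x_i\otimes w^{(i)}\otimes u^{(i)})$, $(x_1,x_2,x_3)=(x,y,z)$, $\Psi_i$ likewise with $\psi$; $H^2_{\rm TSD}=(C^2\cap\ker\delta^2)/\delta^1(C^1)$.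 *)

From mathcomp Require Import all_boot all_algebra.
Set Implicit Arguments. Unset Strict Implicit. Unset Printing Implicit Defensive.
Import GRing.Theory.
Local Open Scope ring_scope.

(* Linear maps out of a tensor power X^{(x)3} are represented (universal     *)
(* property) by trilinear maps X -> X -> X -> V.  Elements of X^{(x)3} are   *)
(* represented as formal finite sums of pure tensors (seq (X * X * X)); two  *)
(* such sums are equal in X^{(x)3} iff every trilinear map agrees on them.   *)

Section Defs.
Variable k : fieldType.

Definition trilinear (U V : lmodType k) (f : U -> U -> U -> V) : Prop :=
  (forall y z, linear (fun x => f x y z)) /\
  (forall x z, linear (fun y => f x y z)) /\
  (forall x y, linear (fun z => f x y z)).

Definition alternating (U V : lmodType k) (f : U -> U -> U -> V) : Prop :=
  forall x y, f x x y = 0 /\ f x y x = 0 /\ f y x x = 0.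

Variable g : lmodType k.

Definition is_3Lie (br : g -> g -> g -> g) : Prop :=
  [/\ trilinear br, alternating br &
      forall x y z w u,
        br (br x y z) w u =
        br (br x w u) y z + br x (br y w u) z + br x y (br z w u)].

Section Cohom3Lie.
Variable br : g -> g -> g -> g.

Definition LieC2 (phi : g -> g -> g -> g) : Prop :=
  trilinear phi /\ alternating phi.

Definition Lie_delta2 (phi : g -> g -> g -> g) (x y z w u : g) : g :=
  br (phi x y z) w u + phi (br x y z) w u
  - br (phi x w u) y z - br x (phi y w u) z - br x y (phi z w u)
  - phi (br x w u) y z - phi x (br y w u) z - phi x y (br z w u).

Definition Lie_delta1 (f : g -> g) (x y z : g) : g :=
  f (br x y z) - br (f x) y z - br x (f y) z - br x y (f z).

Definition X : lmodType k := (k^o * g)%type.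

Definition unitX : X := ((1 : k^o), (0 : g)).
Definition inj (x : g) : X := ((0 : k^o), x).

Definition Delta (w : X) : seq (X * X) := [:: (w, unitX); (unitX, inj w.2)].

(* Delta_3 = (Delta (x) 1) Delta *)
Definition Delta3 (w : X) : seq (X * X * X) :=
  flatten [seq [seq (p.1, p.2, q.2) | p <- Delta q.1] | q <- Delta w].

Definition T (u v w : X) : X :=
  (((u.1 : k) * (v.1 : k) * (w.1 : k) : k^o),
   ((v.1 : k) * (w.1 : k)) *: u.2 + br u.2 v.2 w.2).

Definition teval (V : lmodType k) (beta : X -> X -> X -> V)
  (s : seq (X * X * X)) : V := \sum_(t <- s) beta t.1.1 t.1.2 t.2.

Definition teq (s t : seq (X * X * X)) : Prop :=
  forall (V : lmodType k) (beta : X -> X -> X -> V),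
    trilinear beta -> teval beta s = teval beta t.

Definition TSD_C1 (f : X -> X) : Prop :=
  linear f /\
  forall w : X,
    teq (Delta3 (f w))
        (flatten [seq [:: (f p.1.1, p.1.2, p.2); (p.1.1, f p.1.2, p.2);
                         (p.1.1, p.1.2, f p.2)] | p <- Delta3 w]).

Definition TSD_C2 (psi : X -> X -> X -> X) : Prop :=
  trilinear psi /\
  forall x y z : X,
    teq (Delta3 (psi x y z))
        (flatten [seq
          flatten [seq
            flatten [seq
              [:: (psi p.1.1 q.1.1 r.1.1, T p.1.2 q.1.2 r.1.2, T p.2 q.2 r.2);
                  (T p.1.1 q.1.1 r.1.1, psi p.1.2 q.1.2 r.1.2, T p.2 q.2 r.2);
                  (T p.1.1 q.1.1 r.1.1, T p.1.2 q.1.2 r.1.2, psi p.2 q.2 r.2)]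
            | r <- Delta3 z]
          | q <- Delta3 y]
        | p <- Delta3 x]).

Definition TSD_delta1 (f : X -> X) (x y z : X) : X :=
  f (T x y z) - T (f x) y z - T x (f y) z - T x y (f z).

Definition TSD_delta2 (psi : X -> X -> X -> X) (x y z w u : X) : X :=
  T (psi x y z) w u + psi (T x y z) w u
  - \sum_(p <- Delta3 w) \sum_(q <- Delta3 u)
      (psi (T x p.1.1 q.1.1) (T y p.1.2 q.1.2) (T z p.2 q.2)
       + T (psi x p.1.1 q.1.1) (T y p.1.2 q.1.2) (T z p.2 q.2)
       + T (T x p.1.1 q.1.1) (psi y p.1.2 q.1.2) (T z p.2 q.2)
       + T (T x p.1.1 q.1.1) (T y p.1.2 q.1.2) (psi z p.2 q.2)).

Definition Lambda2 (phi : g -> g -> g -> g) (u v w : X) : X :=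
  inj (phi u.2 v.2 w.2).

End Cohom3Lie.
End Defs.

From mathcomp Require Import all_boot all_algebra ring.
Import GRing.Theory.
Local Open Scope ring_scope.
Set Implicit Arguments. Unset Strict Implicit.

(* The theorem follows from four facts, each proved by direct computation once
   the bracket T of X is known to be trilinear:
   - Lambda^2 phi is a TSD 2-cochain for every trilinear phi   (Lambda2_cochain);
   - delta^2_TSD (Lambda^2 phi) = inj o delta^2_3Lie phi        (Lambda2_delta2);
   - Lambda^1 f is a TSD 1-cochain for every linear f           (Lambda1_cochain);
   - Lambda^2 (delta^1_3Lie f) = delta^1_TSD (Lambda^1 f)       (Lambda1_delta1).
   So Lambda is a chain map in degrees 1 and 2: cocycles go to cocycles and
   coboundaries to coboundaries.  The computations only use trilinearity of the
   bracket, never its skew-symmetry or the Filippov identity. *)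

Section LinearMaps.
Variables (k : fieldType) (U V : lmodType k).

Lemma lin0 (f : U -> V) : linear f -> f 0 = 0.
Proof.
move=> f_lin; have := f_lin 1 0 0; rewrite scaler0 addr0 scale1r => e.
by apply: (@addrI _ (f 0)); rewrite addr0 -e.
Qed.

Lemma linD (f : U -> V) u v : linear f -> f (u + v) = f u + f v.
Proof. by move=> f_lin; have := f_lin 1 u v; rewrite !scale1r. Qed.

Lemma linZ (f : U -> V) a u : linear f -> f (a *: u) = a *: f u.
Proof. by move=> f_lin; have := f_lin a u 0; rewrite !addr0 (lin0 f_lin) addr0. Qed.

Variables (t : U -> U -> U -> V) (t_tri : trilinear t).

Lemma t0_1 y z : t 0 y z = 0. Proof. by case: t_tri => [H _]; exact: lin0 (H y z). Qed.
Lemma t0_2 x z : t x 0 z = 0. Proof. by case: t_tri => [_ [H _]]; exact: lin0 (H x z). Qed.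
Lemma t0_3 x y : t x y 0 = 0. Proof. by case: t_tri => [_ [_ H]]; exact: lin0 (H x y). Qed.

Lemma tD1 u v y z : t (u + v) y z = t u y z + t v y z.
Proof. by case: t_tri => [H _]; exact: linD (H y z). Qed.
Lemma tD2 x u v z : t x (u + v) z = t x u z + t x v z.
Proof. by case: t_tri => [_ [H _]]; exact: linD (H x z). Qed.
Lemma tD3 x y u v : t x y (u + v) = t x y u + t x y v.
Proof. by case: t_tri => [_ [_ H]]; exact: linD (H x y). Qed.

Lemma tZ1 a u y z : t (a *: u) y z = a *: t u y z.
Proof. by case: t_tri => [H _]; exact: linZ (H y z). Qed.
Lemma tZ2 a x u z : t x (a *: u) z = a *: t x u z.
Proof. by case: t_tri => [_ [H _]]; exact: linZ (H x z). Qed.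
Lemma tZ3 a x y u : t x y (a *: u) = a *: t x y u.
Proof. by case: t_tri => [_ [_ H]]; exact: linZ (H x y). Qed.

End LinearMaps.

(* An identity in abelian groups: the terms a and c shared by both sides of a
   difference cancel.  It isolates the cancellation of the scalar terms in the
   computation of delta^2_TSD (Lambda^2 phi). *)
Lemma cancel_shared_terms (V : zmodType) (a b c d e f r : V) :
  a + b + (c + d) - (a + e + (c + f) + r) = b + d - (e + f + r).
Proof.
by rewrite (addrACA a b c d) (addrACA a e c f) -(addrA (a + c) (e + f) r)
  opprD (addrACA (a + c)) subrr add0r.
Qed.

Section TSDObject.
Variables (k : fieldType) (g : lmodType k) (br : g -> g -> g -> g).
Hypothesis br_tri : trilinear br.

Lemma pairE (u v : X g) : u.1 = v.1 -> u.2 = v.2 -> u = v.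
Proof. by case: u v => [? ?] [? ?] /= -> ->. Qed.

Lemma scale_regularE (a b : k) : a *: (b : k^o) = a * b.
Proof. by []. Qed.

Lemma inj_linear : linear (@inj k g).
Proof. by move=> a p q; apply: pairE; rewrite /= ?scaler0 ?addr0. Qed.

Lemma inj2 (v : g) : (inj v).2 = v. Proof. by []. Qed.
Lemma inj0 : inj (0 : g) = 0. Proof. by []. Qed.
Lemma unitX2 : (unitX g).2 = 0. Proof. by []. Qed.

Lemma Lambda2E (phi : g -> g -> g -> g) u v w :
  Lambda2 phi u v w = inj (phi u.2 v.2 w.2).
Proof. by []. Qed.

Lemma T_trilinear : trilinear (T br).
Proof.
split; last split => [x z|x y] a p q; [move=> y z a p q| |];
  apply: pairE => /=; rewrite ?scale_regularE.
- by ring.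
- by rewrite (tD1 br_tri) (tZ1 br_tri) !scalerDr !scalerA (mulrC a) addrACA.
- by ring.
- by rewrite (tD2 br_tri) (tZ2 br_tri) mulrDl scalerDl -mulrA -scalerA scalerDr addrACA.
- by ring.
- by rewrite (tD3 br_tri) (tZ3 br_tri) mulrDr scalerDl (mulrCA y.1) -(scalerA a)
    scalerDr addrACA.
Qed.

Lemma T_unit : T br (unitX g) (unitX g) (unitX g) = unitX g.
Proof. by apply: pairE; rewrite /= ?mulr1 ?scaler0 ?(t0_1 br_tri) ?addr0. Qed.

Lemma Lambda2_trilinear (phi : g -> g -> g -> g) :
  trilinear phi -> trilinear (Lambda2 phi).
Proof.
move=> phi_tri; split; last split=> [u v|u v] a p q; [move=> u v a p q| |];
  rewrite /Lambda2 -inj_linear /=.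
- by rewrite (tD1 phi_tri) (tZ1 phi_tri).
- by rewrite (tD2 phi_tri) (tZ2 phi_tri).
- by rewrite (tD3 phi_tri) (tZ3 phi_tri).
Qed.

Lemma Delta3E (w : X g) : Delta3 w =
  [:: (w, unitX g, unitX g); (unitX g, inj w.2, unitX g);
      (unitX g, unitX g, inj w.2); (unitX g, inj 0, inj w.2)].
Proof. by []. Qed.

End TSDObject.

Section ChainMap.
Variables (k : fieldType) (g : lmodType k) (br : g -> g -> g -> g).
Hypothesis br_tri : trilinear br.

(* Lambda^2 phi is a TSD 2-cochain: on both sides of the compatibility with
   Delta_3 every pure tensor vanishes unless its g-components sit in the slots
   of phi, which leaves phi(x,y,z) in each of the three slots. *)
Lemma Lambda2_cochain (phi : g -> g -> g -> g) :
  trilinear phi -> TSD_C2 br (Lambda2 phi).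
Proof.
move=> phi_tri; split; first exact: Lambda2_trilinear.
move=> x y z V beta beta_tri; rewrite !Delta3E /teval unlock /=.
rewrite !Lambda2E !inj2 !unitX2 ?(t0_1 phi_tri, t0_2 phi_tri, t0_3 phi_tri) !inj0.
rewrite (T_unit br_tri); move: (T br) (T_trilinear br_tri) => Tb Tb_tri.
by rewrite ?(t0_1 Tb_tri, t0_2 Tb_tri, t0_3 Tb_tri,
  t0_1 beta_tri, t0_2 beta_tri, t0_3 beta_tri, addr0, add0r).
Qed.

(* Lambda^2 commutes with the differentials: the first component of
   delta^2_TSD (Lambda^2 phi) vanishes, and after expanding by trilinearity
   its second component is delta^2_3Lie phi plus the scalar terms
   (w.1 u.1) phi(x,y,z) and (y.1 z.1) phi(x,w,u), which cancel. *)
Lemma Lambda2_delta2 (phi : g -> g -> g -> g) x y z w u :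
  trilinear phi ->
  TSD_delta2 br (Lambda2 phi) x y z w u = inj (Lie_delta2 br phi x.2 y.2 z.2 w.2 u.2).
Proof.
move=> phi_tri; rewrite /TSD_delta2 !Delta3E !big_cons !big_nil /=.
apply: pairE => /=; first by ring.
rewrite !(mul0r, mulr0, mul1r, mulr1, scale0r, scale1r, scaler0, addr0, add0r,
   t0_1 br_tri, t0_2 br_tri, t0_3 br_tri, t0_1 phi_tri, t0_2 phi_tri, t0_3 phi_tri).
rewrite !(tD1 br_tri, tD2 br_tri, tD3 br_tri, tZ1 br_tri, tZ2 br_tri, tZ3 br_tri,
   tD1 phi_tri, tD2 phi_tri, tD3 phi_tri, tZ1 phi_tri, tZ2 phi_tri, tZ3 phi_tri).
rewrite ?(mul0r, mulr0, mul1r, mulr1, scale0r, scale1r, scaler0, addr0, add0r,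
   t0_1 br_tri, t0_2 br_tri, t0_3 br_tri, t0_1 phi_tri, t0_2 phi_tri, t0_3 phi_tri).
rewrite /Lie_delta2 cancel_shared_terms !opprD !addrA.
by rewrite [LHS](ACl (1*2*4*6*8*3*5*7)).
Qed.

Definition Lambda1 (f : g -> g) (w : X g) : X g := inj (f w.2).

(* Lambda^1 f is a TSD 1-cochain: both sides of its compatibility with Delta_3
   reduce to f(x) placed in each of the three tensor slots. *)
Lemma Lambda1_cochain (f : g -> g) : linear f -> TSD_C1 (Lambda1 f).
Proof.
move=> f_lin; split=> [a p q|w V beta beta_tri].
  by rewrite /Lambda1 /= f_lin inj_linear.
rewrite !Delta3E /teval unlock /= /Lambda1 !inj2 !unitX2 (lin0 f_lin) inj0.
by rewrite ?(t0_1 beta_tri, t0_2 beta_tri, t0_3 beta_tri, addr0, add0r).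
Qed.

Lemma Lambda1_delta1 (f : g -> g) x y z : linear f ->
  Lambda2 (Lie_delta1 br f) x y z = TSD_delta1 br (Lambda1 f) x y z.
Proof.
move=> f_lin; rewrite /TSD_delta1 /Lambda1; apply: pairE => /=.
  by rewrite !(mul0r, mulr0) !subr0.
rewrite /Lie_delta1 (linD _ _ f_lin) (linZ _ _ f_lin) !(mul0r, mulr0, scale0r, add0r).
by rewrite opprD addrACA subrr add0r.
Qed.

End ChainMap.

Theorem mainTheorem9 (k : fieldType) (g : lmodType k) (br : g -> g -> g -> g) :
  is_3Lie br ->
  (* 3-Lie 2-cocycles go to TSD 2-cocycles *)
  (forall phi : g -> g -> g -> g,
     LieC2 phi ->
     (forall x y z w u : g, Lie_delta2 br phi x y z w u = 0) ->
     TSD_C2 br (Lambda2 phi) /\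
     (forall x y z w u : X g, TSD_delta2 br (Lambda2 phi) x y z w u = 0)) /\
  (* 3-Lie 2-coboundaries go to TSD 2-coboundaries *)
  (forall f : g -> g,
     linear f ->
     exists F : X g -> X g,
       TSD_C1 F /\
       forall x y z : X g,
         Lambda2 (Lie_delta1 br f) x y z = TSD_delta1 br F x y z).
Proof.
case=> br_tri _ _; split.
- move=> phi [phi_tri _] phi_cocycle; split; first exact: Lambda2_cochain.
  by move=> x y z w u; rewrite Lambda2_delta2 // phi_cocycle inj0.
- move=> f f_lin; exists (Lambda1 f); split; first exact: Lambda1_cochain.
  by move=> x y z; exact: Lambda1_delta1.
Qed.
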